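(* Let $\alpha$ be a partial action datum of $M$ on $X\in\mathscr{C}$ such that the coproducts $\coprod_{m\in M}X$ and $\coprod_{(m,n)\in M\times M}\operatorname{dom}\alpha_n$ exist, and let $c\colon\coprod_{m\in M}X\to Y$ be a coequalizer of $p$ and $q$ in $\mathscr{C}$. Then for each $m\in M$ there is a unique morphism $\beta_m\colon Y\to Y$ with $\beta_m\circ c\circ u_s=c\circ u_{ms}$ for all $s\in M$, the datum $\beta(m)=[Y,\mathrm{id}_Y,\beta_m]$ is a global action of $M$ on $Y$, and $c\circ u_e\colon\alpha\to\beta$ is a reflection of $\alpha$ in $\mathrm{Act}_M(\mathscr{C})$.
   Context: Standing assumptions: $M$ is a monoid with identity $e$ and $\mathscr{C}$ is a category with pullbacks. A partial action datum of $M$ on $X$ assigns to each $m\in M$ an isomorphism class of spans $[\operatorname{dom}\alpha_m,\iota_m,\alpha_m]$ with $\iota_m\colon\operatorname{dom}\alpha_m\to X$ a monomorphism and $\alpha_m\colon\operatorname{dom}\alpha_m\to X$ (isomorphism of spans: an isomorphism of apexes commuting with both legs); representatives are fixed. A global action of $M$ on $Y$ is a datum with $\beta(m)=[Y,\mathrm{id}_Y,\beta_m]$, $\beta_e=\mathrm{id}_Y$, $\beta_n\circ\beta_m=\beta_{nm}$. Given data $\alpha$ on $X$ and $\beta$ on $Y$ with representatives $[\operatorname{dom}\alpha_m,\iota_m,\alpha_m]$, $[\operatorname{dom}\beta_m,\kappa_m,\beta_m]$, a datum morphism $\alpha\to\beta$ is a morphism $f\colon X\to Y$ such that for each $m$ there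 is $f_m$ with $\kappa_m\circ f_m=f\circ\iota_m$, $\beta_m\circ f_m=f\circ\alpha_m$. $\mathrm{Act}_M(\mathscr{C})$ is the category of global actions with datum morphisms. A reflection of $\alpha$ in $\mathrm{Act}_M(\mathscr{C})$ is a datum morphism $r\colon\alpha\to\beta$ with $\beta$ global such that for every datum morphism $f\colon\alpha\to\gamma$ with $\gamma$ global there is a unique datum morphism $f'\colon\beta\to\gamma$ with $f'\circ r=f$. Let $u_m\colon X\to\coprod_{m\in M}X$ and $u_{(m,n)}\colon\operatorname{dom}\alpha_n\to\coprod_{(m,n)\in M\times M}\operatorname{dom}\alpha_n$ be the coproduct inclusions, and let $p,q\colon\coprod_{(m,n)}\operatorname{dom}\alpha_n\to\coprod_{m}X$ be the unique morphisms with $p\circ u_{(m,n)}=u_{mn}\circ\iota_n$ and $q\circ u_{(m,n)}=u_m\circ\alpha_n$. *)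

Set Implicit Arguments.
Unset Strict Implicit.

(* Categories, with Leibniz equality of morphisms; comp g f = g o f. *)
Record Category := {
  Obj :> Type;
  Hom : Obj -> Obj -> Type;
  idm : forall A : Obj, Hom A A;
  comp : forall {A B C : Obj}, Hom B C -> Hom A B -> Hom A C;
  comp_assoc : forall (A B C D : Obj) (h : Hom C D) (g : Hom B C) (f : Hom A B),
      comp h (comp g f) = comp (comp h g) f;
  comp_id_l : forall (A B : Obj) (f : Hom A B), comp (idm B) f = f;
  comp_id_r : forall (A B : Obj) (f : Hom A B), comp f (idm A) = f
}.
Arguments Hom {c} _ _.
Arguments idm {c} _.
Arguments comp {c A B C} _ _.

Record Monoid := {
  mcar :> Type;
  mop : mcar -> mcar -> mcar;
  munit : mcar;
  mop_assoc : forall a b c, mop a (mop b c) = mop (mop a b) c;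
  mop_unit_l : forall a, mop munit a = a;
  mop_unit_r : forall a, mop a munit = a
}.
Arguments mop {m} _ _.
Arguments munit {m}.

Section Cat.
Context {C : Category}.

Definition is_mono {A B : C} (f : Hom A B) : Prop :=
  forall (Z : C) (g h : Hom Z A), comp f g = comp f h -> g = h.

Definition is_pullback {A B P Q : C} (f : Hom A Q) (g : Hom B Q)
    (p1 : Hom P A) (p2 : Hom P B) : Prop :=
  comp f p1 = comp g p2 /\
  forall (Z : C) (z1 : Hom Z A) (z2 : Hom Z B), comp f z1 = comp g z2 ->
    exists! h : Hom Z P, comp p1 h = z1 /\ comp p2 h = z2.

Definition has_pullbacks : Prop :=
  forall (A B Q : C) (f : Hom A Q) (g : Hom B Q),
    exists (P : C) (p1 : Hom P A) (p2 : Hom P B), is_pullback f g p1 p2.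

Definition is_coproduct {I : Type} (F : I -> C) (P : C)
    (u : forall i, Hom (F i) P) : Prop :=
  forall (Z : C) (g : forall i, Hom (F i) Z),
    exists! h : Hom P Z, forall i, comp h (u i) = g i.

Definition is_coequalizer {A B Y : C} (p q : Hom A B) (c : Hom B Y) : Prop :=
  comp c p = comp c q /\
  forall (Z : C) (g : Hom B Z), comp g p = comp g q ->
    exists! h : Hom Y Z, comp h c = g.

End Cat.
Arguments is_coproduct {C I} F P u.
Arguments is_coequalizer {C A B Y} p q c.
Arguments is_mono {C A B} f.
Arguments has_pullbacks : clear implicits.

(* A partial action datum of M on X: for each m, a fixed representative
   span  X <-iota_m- dom alpha_m -alpha_m-> X  with iota_m mono. *)
Record PDatum (C : Category) (M : Monoid) (X : C) := {
  pdom : M -> C;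
  piota : forall m, Hom (pdom m) X;
  pact : forall m, Hom (pdom m) X;
  piota_mono : forall m, is_mono (piota m)
}.
Arguments PDatum : clear implicits.
Arguments pdom {C M X} _ _.
Arguments piota {C M X} _ _.
Arguments pact {C M X} _ _.

Section Act.
Context {C : Category} {M : Monoid}.

Lemma id_is_mono (Y : C) : is_mono (idm Y).
Proof. intros Z g h E. now rewrite !comp_id_l in E. Qed.

Definition gdatum (Y : C) (beta : M -> Hom Y Y) : PDatum C M Y :=
  {| pdom := fun _ => Y; piota := fun _ => idm Y; pact := beta;
     piota_mono := fun _ => @id_is_mono Y |}.

Definition is_global_action {Y : C} (beta : M -> Hom Y Y) : Prop :=
  beta munit = idm Y /\
  forall m n : M, comp (beta n) (beta m) = beta (mop n m).

Definition datum_morphism {X Y : C} (a : PDatum C M X) (b : PDatum C M Y)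
    (f : Hom X Y) : Prop :=
  forall m : M, exists fm : Hom (pdom a m) (pdom b m),
    comp (piota b m) fm = comp f (piota a m) /\
    comp (pact b m) fm = comp f (pact a m).

Definition is_reflection {X Y : C} (a : PDatum C M X) (beta : M -> Hom Y Y)
    (r : Hom X Y) : Prop :=
  is_global_action beta /\
  datum_morphism a (gdatum beta) r /\
  forall (Z : C) (gamma : M -> Hom Z Z) (f : Hom X Z),
    is_global_action gamma ->
    datum_morphism a (gdatum gamma) f ->
    exists! f' : Hom Y Z,
      datum_morphism (gdatum beta) (gdatum gamma) f' /\ comp f' r = f.

End Act.

(* The coequalizer  c  of  p, q  identifies, for all
   m, n, the two composites  u_{mn} o iota_n  and  u_m o alpha_n;  so  Y  is
   the quotient of  "M copies of X"  by exactly the relations that a global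
   action extending  alpha  must satisfy. *)

From Stdlib Require Import ClassicalEpsilon.

Set Implicit Arguments.

Lemma coprod_ext {C : Category} {I : Type} {F : I -> C} {P : C}
    {u : forall i, Hom (F i) P} (H : is_coproduct F P u) {Z : C} {g h : Hom P Z} :
  (forall i, comp g (u i) = comp h (u i)) -> g = h.
Proof.
  intro E. destruct (H Z (fun i => comp h (u i))) as [k [_ Uk]].
  rewrite <- (Uk g E). apply Uk. reflexivity.
Qed.

Lemma coeq_epi {C : Category} {A B Y : C} {p q : Hom A B} {c : Hom B Y}
    (H : is_coequalizer p q c) {Z : C} {g h : Hom Y Z} :
  comp g c = comp h c -> g = h.
Proof.
  intro E. destruct H as [Hc U].
  assert (Hpq : comp (comp h c) p = comp (comp h c) q)
    by (rewrite <- !comp_assoc, Hc; reflexivity).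
  destruct (U Z (comp h c) Hpq) as [k [_ Uk]].
  rewrite <- (Uk g E). apply Uk. reflexivity.
Qed.

Section DatumMorphisms.
Context {C : Category} {M : Monoid}.

(* A datum morphism into a global datum [Z, id, gamma_m] is a map  f  with
   f o alpha_m = gamma_m o f o iota_m  for every  m  (the component is forced
   to be  f o iota_m). *)
Lemma datum_morphism_to_global {X Z : C} (a : PDatum C M X)
    (gamma : M -> Hom Z Z) (f : Hom X Z) :
  datum_morphism a (gdatum gamma) f <->
  forall m, comp (gamma m) (comp f (piota a m)) = comp f (pact a m).
Proof.
  split.
  - intros Hf m. destruct (Hf m) as [fm [E1 E2]]. simpl in E1, E2.
    rewrite comp_id_l in E1. rewrite <- E1. exact E2.
  - intros Hf m. exists (comp f (piota a m)). simpl. split.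
    + apply comp_id_l.
    + apply Hf.
Qed.

Lemma datum_morphism_global {Y Z : C} (beta : M -> Hom Y Y)
    (gamma : M -> Hom Z Z) (f : Hom Y Z) :
  datum_morphism (gdatum beta) (gdatum gamma) f <->
  forall m, comp f (beta m) = comp (gamma m) f.
Proof.
  rewrite datum_morphism_to_global. simpl.
  split; intros Hf m; specialize (Hf m); rewrite comp_id_r in *; auto.
Qed.

End DatumMorphisms.

Section CoequalizerReflection.
Context {C : Category} {M : Monoid} {X : C} {alpha : PDatum C M X}
  {CX : C} (u : forall m : M, Hom X CX)
  (HCX : is_coproduct (fun _ : M => X) CX u)
  {CD : C} (u2 : forall mn : M * M, Hom (pdom alpha (snd mn)) CD)
  (HCD : is_coproduct (fun mn : M * M => pdom alpha (snd mn)) CD u2)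
  (p q : Hom CD CX)
  (Hp : forall m n : M, comp p (u2 (m, n)) = comp (u (mop m n)) (piota alpha n))
  (Hq : forall m n : M, comp q (u2 (m, n)) = comp (u m) (pact alpha n))
  {Y : C} (c : Hom CX Y) (Hc : is_coequalizer p q c).

Lemma coequalizes_of_relations {Z : C} (g : Hom CX Z) :
  (forall m n, comp g (comp (u (mop m n)) (piota alpha n))
               = comp g (comp (u m) (pact alpha n))) ->
  comp g p = comp g q.
Proof.
  intro Hg. apply (coprod_ext HCD). intros [m n].
  rewrite <- !comp_assoc, Hp, Hq. apply Hg.
Qed.

Lemma coeq_relation (m n : M) :
  comp c (comp (u (mop m n)) (piota alpha n)) = comp c (comp (u m) (pact alpha n)).
Proof. rewrite <- Hp, <- Hq, !comp_assoc, (proj1 Hc). reflexivity. Qed.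

Lemma quotient_ext {Z : C} (g h : Hom Y Z) :
  (forall s, comp g (comp c (u s)) = comp h (comp c (u s))) -> g = h.
Proof.
  intro E. apply (coeq_epi Hc), (coprod_ext HCX). intro s.
  rewrite <- !comp_assoc. apply E.
Qed.

Lemma translation_descends (m : M) :
  exists b : Hom Y Y, forall s, comp b (comp c (u s)) = comp c (u (mop m s)).
Proof.
  destruct (HCX CX (fun s => u (mop m s))) as [sg [Hsg _]]. simpl in Hsg.
  assert (E : comp (comp c sg) p = comp (comp c sg) q).
  { apply coequalizes_of_relations. intros k n.
    rewrite <- !comp_assoc, (comp_assoc sg), (comp_assoc sg), !Hsg,
      mop_assoc. apply coeq_relation. }
  destruct (proj2 Hc Y (comp c sg) E) as [b [Hb _]]. exists b.
  intro s. rewrite comp_assoc, Hb, <- comp_assoc, Hsg. reflexivity.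
Qed.

Section Translations.
Context {beta : M -> Hom Y Y}
  (Hbeta : forall m s, comp (beta m) (comp c (u s)) = comp c (u (mop m s))).

Lemma translation_unique (m : M) (b : Hom Y Y) :
  (forall s, comp b (comp c (u s)) = comp c (u (mop m s))) -> b = beta m.
Proof. intro Hb. apply quotient_ext. intro s. rewrite Hb, Hbeta. reflexivity. Qed.

Lemma translations_global : is_global_action beta.
Proof.
  split.
  - symmetry. apply translation_unique. intro s.
    rewrite comp_id_l, mop_unit_l. reflexivity.
  - intros m n. apply translation_unique. intro s.
    rewrite <- comp_assoc, !Hbeta, mop_assoc. reflexivity.
Qed.

Lemma point_as_translate (s : M) :
  comp c (u s) = comp (beta s) (comp c (u munit)).
Proof. rewrite Hbeta, mop_unit_r. reflexivity. Qed.

Lemma unit_datum_morphism : datum_morphism alpha (gdatum beta) (comp c (u munit)).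
Proof.
  apply datum_morphism_to_global. intro m.
  rewrite comp_assoc, <- point_as_translate, <- !comp_assoc, <- coeq_relation,
    mop_unit_l. reflexivity.
Qed.

Lemma translations_reflection :
  is_reflection alpha beta (comp c (u munit)).
Proof.
  split; [exact translations_global|]. split; [exact unit_datum_morphism|].
  intros Z gamma f [Ge Gm] Hf. rewrite datum_morphism_to_global in Hf.
  (* the map  u_s |-> gamma_s o f  respects the relations *)
  destruct (HCX Z (fun s => comp (gamma s) f)) as [g [Hg _]]. simpl in Hg.
  assert (Eg : comp g p = comp g q).
  { apply coequalizes_of_relations. intros m n.
    rewrite !comp_assoc, !Hg, <- Gm, <- !comp_assoc, Hf. reflexivity. }
  destruct (proj2 Hc Z g Eg) as [f' [Hf'c _]].
  exists f'. split.
  - split.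
    + apply datum_morphism_global. intro m. apply quotient_ext. intro s.
      rewrite <- !comp_assoc, Hbeta, !(comp_assoc f'), !Hf'c, !Hg,
        comp_assoc, Gm. reflexivity.
    + rewrite comp_assoc, Hf'c, Hg, Ge, comp_id_l. reflexivity.
  - (* an equivariant factorisation sends  c o u_s = beta_s o r  to
       gamma_s o f, as  f'  does *)
    intros f'' [Hd Hr]. rewrite datum_morphism_global in Hd.
    apply quotient_ext. intro s.
    rewrite comp_assoc, Hf'c, Hg, point_as_translate, comp_assoc, Hd,
      <- comp_assoc, Hr. reflexivity.
Qed.

End Translations.
End CoequalizerReflection.

Theorem mainTheorem11 (C : Category) (M : Monoid) (HC : has_pullbacks C)
  (X : C) (alpha : PDatum C M X)
  (CX : C) (u : forall m : M, Hom X CX)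
  (HCX : is_coproduct (fun _ : M => X) CX u)
  (CD : C) (u2 : forall mn : M * M, Hom (pdom alpha (snd mn)) CD)
  (HCD : is_coproduct (fun mn : M * M => pdom alpha (snd mn)) CD u2)
  (p q : Hom CD CX)
  (Hp : forall m n : M, comp p (u2 (m, n)) = comp (u (mop m n)) (piota alpha n))
  (Hq : forall m n : M, comp q (u2 (m, n)) = comp (u m) (pact alpha n))
  (Y : C) (c : Hom CX Y) (Hc : is_coequalizer p q c) :
  exists beta : M -> Hom Y Y,
    (forall m s : M, comp (beta m) (comp c (u s)) = comp c (u (mop m s))) /\
    (forall (m : M) (b : Hom Y Y),
        (forall s : M, comp b (comp c (u s)) = comp c (u (mop m s))) -> b = beta m) /\
    is_global_action beta /\
    is_reflection alpha beta (comp c (u munit)).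
Proof.
  destruct (choice _ (translation_descends HCX HCD Hp Hq Hc)) as [beta Hbeta].
  exists beta. split; [exact Hbeta|].
  split; [exact (translation_unique HCX Hc Hbeta)|].
  split; [exact (translations_global HCX Hc Hbeta)|].
  exact (translations_reflection HCX HCD Hp Hq Hc Hbeta).
Qed.
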